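(* Let $\mathbb X,\mathbb Y,\mathbb X^\sharp,\mathbb Y^\sharp$ be sets, $c:\mathbb X\times\mathbb X^\sharp\to\overline{\mathbb R}$ and $d:\mathbb Y\times\mathbb Y^\sharp\to\overline{\mathbb R}$ couplings, $E:\mathbb X\times\mathbb Y^\sharp\to\overline{\mathbb R}$, $f:\mathbb X\to\overline{\mathbb R}$ and $g:\mathbb Y\to\overline{\mathbb R}$. If $$f(x)\ge\inf_{y\in\mathbb Y}\Big(\sup_{y^\sharp\in\mathbb Y^\sharp}\big(d(y,y^\sharp)\mathbin{\underset{\cdot}{+}}(-E(x,y^\sharp))\big)\mathbin{\overset{\cdot}{+}} g(y)\Big)\quad\text{for all }x\in\mathbb X,$$ then $$f^{c}(x^\sharp)\le\inf_{y^\sharp\in\mathbb Y^\sharp}\Big(\sup_{x\in\mathbb X}\big(c(x,x^\sharp)\mathbin{\underset{\cdot}{+}} E(x,y^\sharp)\big)\mathbin{\overset{\cdot}{+}} g^{-d}(y^\sharp)\Big)\quad\text{for all }x^\sharp\in\mathbb X^\sharp.$$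
   Context: $\overline{\mathbb R}=[-\infty,+\infty]$. The Moreau lower addition $\mathbin{\underset{\cdot}{+}}$ is usual addition extended by $(+\infty)\mathbin{\underset{\cdot}{+}}(-\infty)=(-\infty)\mathbin{\underset{\cdot}{+}}(+\infty)=-\infty$; the Moreau upper addition $\mathbin{\overset{\cdot}{+}}$ is usual addition extended by $(+\infty)\mathbin{\overset{\cdot}{+}}(-\infty)=(-\infty)\mathbin{\overset{\cdot}{+}}(+\infty)=+\infty$. $f^{c}(x^\sharp)=\sup_{x}\big(c(x,x^\sharp)\mathbin{\underset{\cdot}{+}}(-f(x))\big)$ and $g^{-d}(y^\sharp)=\sup_{y}\big((-d(y,y^\sharp))\mathbin{\underset{\cdot}{+}}(-g(y))\big)$. *)

From HB Require Import structures.
From mathcomp Require Import all_boot all_order all_algebra.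
From mathcomp Require Import all_classical all_reals ereal.
Set Implicit Arguments. Unset Strict Implicit. Unset Printing Implicit Defensive.
Import Order.TTheory GRing.Theory Num.Theory.
Local Open Scope classical_set_scope.
Local Open Scope ereal_scope.

(* Moreau lower addition: (+oo) + (-oo) = -oo  (MathComp-Analysis [adde]) *)
Definition lower_add {R : realType} (a b : \bar R) : \bar R := adde a b.
(* Moreau upper addition: (+oo) + (-oo) = +oo  (MathComp-Analysis [dual_adde]) *)
Definition upper_add {R : realType} (a b : \bar R) : \bar R := dual_adde a b.

Definition cconj {R : realType} {X Xs : Type} (c : X -> Xs -> \bar R)
  (f : X -> \bar R) (xs : Xs) : \bar R :=
  ereal_sup [set lower_add (c x xs) (- f x) | x in [set: X]].

Definition mdconj {R : realType} {Y Ys : Type} (d : Y -> Ys -> \bar R)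
  (g : Y -> \bar R) (ys : Ys) : \bar R :=
  ereal_sup [set lower_add (- d y ys) (- g y) | y in [set: Y]].

From HB Require Import structures.
From mathcomp Require Import all_boot all_order all_algebra.
From mathcomp Require Import all_classical all_reals ereal.
From mathcomp Require Import lra.
Import Order.TTheory GRing.Theory Num.Theory DualAddTheory.
Local Open Scope classical_set_scope.
Local Open Scope ereal_scope.

(* Write + for the lower and +' for the upper addition, and fix x, x#, y#.
   Negation exchanges the two additions, so the hypothesis at x reads
   -f x <= sup_y (-D_y + -g y) with D_y := sup_y# (d(y,y#) + -E(x,y#)), and
   -D_y <= -d(y,y#) +' E(x,y#).  After adding c(x,x#) inside the supremum it
   remains to bound c(x,x#) + ((-d(y,y#) +' E(x,y#)) + -g y) by
   (c(x,x#) + E(x,y#)) +' (-d(y,y#) + -g y), a rearrangement that holds for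
   every choice of infinite values; the two suprema then dominate the factors. *)

Section MoreauAddition.
Variable R : realType.
Implicit Types (a p e q : \bar R).

Lemma adde_ereal_sup_le (T : Type) (A : set T) (F : T -> \bar R) a :
  a + ereal_sup (F @` A) <= ereal_sup [set a + F t | t in A].
Proof.
case: a => [r||]; last by rewrite addNye leNye.
- rewrite -leeBrDl //; apply: ge_ereal_sup => _ [t At <-].
  by rewrite leeBrDl //; apply: ereal_sup_ubound; exists t.
- have [->|] := eqVneq (ereal_sup (F @` A)) -oo; first by rewrite addeNy leNye.
  rewrite -ltNye => /ereal_sup_gt [_ [t At <-] Ft_gt].
  rewrite addye; last by rewrite -ltNye (lt_le_trans Ft_gt) // ereal_sup_ubound.
  by apply: ereal_sup_ubound; exists t => //; rewrite addye // -ltNye.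
Qed.

Lemma oppe_ereal_inf_image (T : Type) (A : set T) (F : T -> \bar R) :
  - ereal_inf (F @` A) = ereal_sup [set - F t | t in A].
Proof. by rewrite -ereal_supN image_comp. Qed.

Lemma oppe_dual_adde a q : - (a + q)%dE = - a - q.
Proof. by rewrite dual_addeE oppeK. Qed.

Lemma adde_dual_adde_rearrange_le a p e q :
  a + ((p + e)%dE + q) <= ((a + e)%E + (p + q)%E)%dE.
Proof.
by case: a => [a||]; case: p => [p||]; case: e => [e||]; case: q => [q||] //=;
  rewrite ?lee_fin; lra.
Qed.

End MoreauAddition.

Theorem proposition4 (R : realType) (X Y Xs Ys : Type)
  (c : X -> Xs -> \bar R) (d : Y -> Ys -> \bar R)
  (E : X -> Ys -> \bar R) (f : X -> \bar R) (g : Y -> \bar R) :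
  (forall x : X,
     ereal_inf [set upper_add
                  (ereal_sup [set lower_add (d y ys) (- E x ys) | ys in [set: Ys]])
                  (g y) | y in [set: Y]] <= f x) ->
  forall xs : Xs,
    cconj c f xs <=
    ereal_inf [set upper_add
                 (ereal_sup [set lower_add (c x xs) (E x ys) | x in [set: X]])
                 (mdconj d g ys) | ys in [set: Ys]].
Proof.
rewrite /cconj /mdconj /lower_add /upper_add => hyp xs.
apply: ge_ereal_sup => _ [x _ <-]; apply: le_ereal_inf_tmp => _ [ys _ <-].
set D := fun y => ereal_sup [set d y ys' - E x ys' | ys' in [set: Ys]].
have negf : - f x <= ereal_sup [set - D y - g y | y in [set: Y]].
  rewrite (eq_imagel (f' := fun y => - (D y + g y)%dE)); last first.
    by move=> y _; rewrite oppe_dual_adde.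
  by rewrite -oppe_ereal_inf_image leeN2; exact: hyp.
have negD y : - D y <= (- d y ys + E x ys)%dE.
  by rewrite dual_addeE oppeK leeN2; apply: ereal_sup_ubound; exists ys.
apply: (le_trans (leeD2l _ negf)); apply: (le_trans (adde_ereal_sup_le _ _ _ _ _)).
apply: ge_ereal_sup => _ [y _ <-].
apply: (le_trans (leeD2l _ (leeD2r _ (negD y)))).
apply: (le_trans (adde_dual_adde_rearrange_le _ _ _ _ _)).
by apply: lee_dD; apply: ereal_sup_ubound; [exists x | exists y].
Qed.
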